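(* Let $p\geq 0$ and let $G$ be a balanced bipartite graph of order $2n$ with $\delta(G)\geq k$, where $n\geq n_0(k,p)$, with $n_0(k,p)=2k^2+3$ if $k=p+2$ and $n_0(k,p)=(k+2)(k-p+1)$ otherwise. If $k\geq p+1$ and $\rho(G)\geq \sqrt{n(n-k+p)+k(k-p)}$, then $G$ is $2p$-Hamilton-biconnected.
   Context: $\rho(G)$ is the largest eigenvalue of the adjacency matrix. A bipartite graph $G=(X,Y;E)$ is balanced if $|X|=|Y|$; it is Hamilton-biconnected if for every $u\in X$, $v\in Y$ there is a Hamiltonian path with ends $u,v$. A vertex set $W$ is balanced if $|W\cap X|=|W\cap Y|$; $G$ is $2p$-Hamilton-biconnected if for every balanced $W$ with $|W|=2p$, the subgraph induced by $V(G)\setminus W$ is Hamilton-biconnected. *)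

From HB Require Import structures.
From mathcomp Require Import all_boot all_order all_algebra.
From mathcomp Require Import classical_sets reals.
Set Implicit Arguments. Unset Strict Implicit. Unset Printing Implicit Defensive.
Import Order.TTheory GRing.Theory Num.Theory.
Local Open Scope ring_scope.

Definition simple_graph (T : finType) (e : rel T) : Prop :=
  symmetric e /\ irreflexive e.

Definition min_deg_ge (T : finType) (e : rel T) (k : nat) : Prop :=
  forall x : T, (k <= #|[set y | e x y]|)%N.

Definition bipartition (T : finType) (e : rel T) (X : {set T}) : Prop :=
  forall x y, e x y -> (x \in X) != (y \in X).

Definition adj_mx (R : pzRingType) (T : finType) (e : rel T) : 'M[R]_#|T| :=
  \matrix_(i, j) (e (enum_val i) (enum_val j))%:R.

(* rho(G): the largest eigenvalue of the adjacency matrix (the eigenvalues of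
   a real symmetric matrix are real; the set is finite and nonempty). *)
Definition spec_rad (R : realType) (T : finType) (e : rel T) : R :=
  sup [set a : R | eigenvalue (adj_mx R e) a].

Definition ham_path_avoiding (T : finType) (e : rel T) (W : {set T}) (u v : T)
  : Prop :=
  exists s : seq T,
    [/\ uniq (u :: s), (forall x, (x \in u :: s) = (x \notin W)),
        path e u s & last u s = v].

Definition ham_biconnected_minus (T : finType) (e : rel T) (X W : {set T})
  : Prop :=
  forall u v, u \in X :\: W -> v \in ~: X :\: W -> ham_path_avoiding e W u v.

Definition ham_biconnected_2p (T : finType) (e : rel T) (X : {set T}) (p : nat)
  : Prop :=
  forall W : {set T}, #|W :&: X| = #|W :&: ~: X| -> #|W| = (2 * p)%N ->
    ham_biconnected_minus e X W.

Definition n0 (k p : nat) : nat :=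
  if k == p.+2 then (2 * k ^ 2 + 3)%N else ((k + 2) * (k - p + 1))%N.

From HB Require Import structures.
From mathcomp Require Import all_boot all_order all_algebra.
From mathcomp Require Import classical_sets reals.
From mathcomp Require Import boolp polyrcf zify ring lra.
(* Give the finset names precedence over their classical_sets homonyms. *)
Import mathcomp.boot.fintype mathcomp.boot.finset Order.TTheory GRing.Theory Num.Theory.
Set Implicit Arguments. Unset Strict Implicit. Unset Printing Implicit Defensive.

(* Spectral part: if a is an eigenvalue with eigenvector x, Cauchy-Schwarz on each
   neighbourhood gives a^2 * sum_X x^2 <= e(G) * sum_Y x^2 and symmetrically, so
   a^2 < e(G) unless G is complete bipartite.  Hence e(G) > n(n-k+p) + k(k-p), i.e.
   G has fewer than (k-p)(n-k) non-edges.  Deleting a balanced set W of 2p vertices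
   leaves a balanced bipartite graph with parts of size m = n-p, minimum degree
   t = k-p and fewer than t(m-t) non-edges.
   Combinatorial part: such a graph is Hamilton-biconnected, by induction on m and on
   the number of non-edges.  If non-adjacent a, b satisfy d(a) + d(b) >= m+2, adding
   the edge ab changes nothing (bipartite Bondy-Chvatal closure: a Hamiltonian path
   through ab is rerouted around it by a crossover).  Otherwise the non-edge count
   forces an edge ab with d(a) + d(b) >= m+2, next to a vertex of minimum degree,
   such that G - a - b still satisfies the condition with m-1 and t-1; Hamiltonian
   paths of G - a - b then absorb a and b. *)

(** * Surgery on paths *)

Section PathSurgery.
Variables (T : eqType) (e : rel T).
Implicit Types (u x y : T) (s : seq T).

Lemma next_path_edge u s x :
  path e u s -> x \in u :: s -> x != last u s -> e x (next (u :: s) x).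
Proof.
move=> es xs xl; pose e' := [rel y z | e y z || (y == last u s)].
have e'_cycle : cycle e' (u :: s).
  by rewrite /= rcons_path /= eqxx orbT andbT; apply: sub_path es => y z /= ->.
by have /= := next_cycle e'_cycle xs; rewrite (negbTE xl) orbF.
Qed.

Lemma next_last_cat u s1 y s2 :
  uniq (u :: s1 ++ y :: s2) -> next (u :: s1 ++ y :: s2) (last u s1) = y.
Proof.
rewrite -cat_cons lastI cat_rcons => U.
by rewrite -(next_rot (size (belast u s1)) U) rot_size_cat /= eqxx.
Qed.

Lemma split_next u s x : uniq (u :: s) -> x \in u :: s -> x != last u s ->
  exists s1 s2, s = s1 ++ next (u :: s) x :: s2 /\ last u s1 = x.
Proof.
move=> U xs; move: U; case/splitPl: xs => s1 s2 <-.
case: s2 => [|y s2] U; first by rewrite cats0 eqxx.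
by rewrite next_last_cat // => _; exists s1, s2.
Qed.

Lemma next_neq_head u s x : uniq (u :: s) -> x != last u s -> next (u :: s) x != u.
Proof.
move=> U xl; have /andP[us _] := U; apply: contraNneq xl => nx; apply/eqP.
by rewrite -(prev_next U x) nx prev_nth mem_head (memNindex us) -last_nth.
Qed.

Lemma cat_split l r s1 s2 : l ++ r = s1 ++ s2 ->
  (exists m, l = s1 ++ m /\ s2 = m ++ r) \/ (exists m, s1 = l ++ m /\ r = m ++ s2).
Proof.
elim: l s1 => [|x l IH] s1 /=; first by move=> ->; right; exists s1.
case: s1 => [|y s1] /= E; first by left; exists (x :: l); rewrite -E.
by case: E => -> /IH [[m [-> ->]]|[m [-> ->]]]; [left|right]; exists m.
Qed.

Lemma path_or_split (f : rel T) u s :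
  path [rel x y | e x y || f x y] u s ->
  path e u s \/ exists l r0 r, [/\ s = l ++ r0 :: r, path e u l, f (last u l) r0
                                 & path [rel x y | e x y || f x y] r0 r].
Proof.
elim: s u => [|y s IH] u /=; first by left.
case/andP => euy ps; have [e_uy|/negbTE ne_uy] := boolP (e u y); last first.
  by right; exists [::], y, s; rewrite ne_uy in euy.
case: (IH y ps) => [p|[l [r0 [r [-> pl fe pr]]]]]; first by left.
by right; exists (y :: l), r0, r; rewrite /= e_uy.
Qed.

Hypothesis e_sym : symmetric e.

Lemma path_rev_cat x y s t :
  path e x (rev (y :: s) ++ t) = [&& e x (last y s), path e y s & path e y t].
Proof.
elim: s y t => [|z s IH] y t //.
rewrite rev_cons cat_rcons IH /= [e z y]e_sym.
by case: (e x _); case: (e y z); case: (path e z s).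
Qed.

Hypothesis e_irr : irreflexive e.

(* Crossover: the path broken between [last u l] and [r0] is rejoined through the
   consecutive pair [last u s1], [q] by reversing the part between the break and it. *)
Lemma path_crossover u l r0 r s1 q s2 :
  l ++ r0 :: r = s1 ++ q :: s2 ->
  path e u l -> path e r0 r -> e (last u l) (last u s1) -> e r0 q ->
  exists2 s', path e u s' & last u s' = last u (l ++ r0 :: r) /\ perm_eq s' (l ++ r0 :: r).
Proof.
move=> E pl pr el eq; have [[m [El Es]]|[m [Es Er]]] := cat_split E.
- case: m El Es => [|q' l2] El; first by move: el; rewrite El cats0 e_irr.
  case=> qE Es; subst q'; exists (s1 ++ rev (q :: l2) ++ r0 :: r).
    move: pl el; rewrite El cat_path last_cat /= => /and3P[pl1 _ pl2] el.
    by rewrite cat_path pl1 path_rev_cat e_sym el pl2 /= e_sym eq pr.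
  by rewrite El !last_cat /= -catA perm_cat2l perm_cat2r perm_rev perm_refl.
- case: m Es Er => [|r1 m] Es; first by move: el; rewrite Es cats0 e_irr.
  case=> rE Er; subst r1; exists (l ++ rev (r0 :: m) ++ q :: s2).
    move: pr el; rewrite Er Es cat_path last_cat /= => /and3P[pr1 _ pr2] el.
    by rewrite cat_path pl path_rev_cat el pr1 /= eq pr2.
  by rewrite Er !last_cat /= last_cat perm_cat2l -cat_cons perm_cat2r perm_rev perm_refl.
Qed.

End PathSurgery.

(** * Hamilton-biconnectedness of dense balanced bipartite graphs *)

Section BipartiteHamilton.
Variable T : finType.
Implicit Types (e : rel T) (A B X V D S : {set T}) (u v x y a b : T) (s : seq T) (m : nat).

Definition ham_path e V u v s :=
  [/\ uniq (u :: s), forall x, (x \in u :: s) = (x \in V), path e u s & last u s = v].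

Definition ham_biconnected e X V :=
  forall u v, u \in V :&: X -> v \in V :\: X -> exists s, ham_path e V u v s.

Definition deg_in e S x := #|[set y in S | e x y]|.

Definition nondeg_in e S x := #|[set y in S | ~~ e x y]|.

Definition nonedges e A B := \sum_(a in A) nondeg_in e B a.

Definition single_edge a b : rel T :=
  [rel x y | (x == a) && (y == b) || (x == b) && (y == a)].

Definition add_edge e a b : rel T := [rel x y | e x y || single_edge a b x y].

Lemma bipartition_adjN e X x y : bipartition e X -> e x y -> (y \in X) = (x \notin X).
Proof. by move=> B /B; case: (x \in X); case: (y \in X). Qed.

Lemma bipartition_irr e X : bipartition e X -> irreflexive e.
Proof. by move=> B x; apply/negP => /B; rewrite eqxx. Qed.

Lemma bipartitionC e X : bipartition e X -> bipartition e (~: X).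
Proof. by move=> B x y /B; rewrite !inE; case: (x \in X); case: (y \in X). Qed.

Lemma bipartition_add_edge e X a b :
  bipartition e X -> a \in X -> b \notin X -> bipartition (add_edge e a b) X.
Proof.
move=> B aX bX x y /orP[/B //|/orP[] /andP[/eqP-> /eqP->]];
  by rewrite aX (negbTE bX).
Qed.

Lemma symmetric_add_edge e a b : symmetric e -> symmetric (add_edge e a b).
Proof.
move=> e_sym x y; rewrite /add_edge /single_edge /= e_sym; congr (_ || _).
by rewrite orbC; congr (_ || _); apply: andbC.
Qed.

Lemma ham_path_perm e e' V u v s s' :
  ham_path e' V u v s -> perm_eq s' s -> path e u s' -> last u s' = v -> ham_path e V u v s'.
Proof.
move=> [U M _ _] ss' P L; have us : perm_eq (u :: s') (u :: s) by rewrite perm_cons.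
by split=> // [|x]; rewrite ?(perm_uniq us) // -M (perm_mem us).
Qed.

Lemma ham_path_add2 e V a b x y s u v s' :
  ham_path e (V :\: [set a; b]) x y s -> a \in V -> b \in V -> a != b ->
  perm_eq (u :: s') [:: a, b & x :: s] -> path e u s' -> last u s' = v ->
  ham_path e V u v s'.
Proof.
move=> [U M _ _] aV bV ab ss' P L; split => //.
  rewrite (perm_uniq ss') /= -/(uniq (x :: s)) U !andbT.
  by rewrite in_cons negb_or ab (M a) (M b) !inE !eqxx /= orbT.
move=> z; rewrite (perm_mem ss') 2!in_cons M !inE.
by case: (z =P a) => [->|_] //=; case: (z =P b) => [->|_] //=; rewrite andbT.
Qed.

Lemma ham_path_next e X V u v s x :
  bipartition e X -> ham_path e V u v s -> x \in V -> x != v ->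
  [/\ next (u :: s) x \in V, next (u :: s) x != u
    & (next (u :: s) x \in X) = (x \notin X)].
Proof.
move=> B [U M P L] xV; rewrite -L => xv; have xs : x \in u :: s by rewrite M.
by rewrite -M mem_next xs next_neq_head // (bipartition_adjN B (next_path_edge P xs xv)).
Qed.

Lemma sep_overlap D (P Q : pred T) :
  #|D| < #|[set x in D | P x]| + #|[set x in D | Q x]| ->
  exists2 x, x \in D & P x && Q x.
Proof.
move=> H; suff : 0 < #|[set x in D | P x] :&: [set x in D | Q x]|.
  rewrite card_gt0 => /set0Pn[x]; rewrite !inE => /andP[/andP[xD Px] /andP[_ Qx]].
  by exists x; rewrite ?Px.
have : #|[set x in D | P x] :|: [set x in D | Q x]| <= #|D|.
  by apply/subset_leq_card/subsetP => x; rewrite !inE => /orP[] /andP[].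
have := cardsUI [set x in D | P x] [set x in D | Q x]; lia.
Qed.

Lemma card_sep_inj (f : T -> T) D S (Q : pred T) :
  injective f -> (forall x, x \in D -> f x \in S) -> #|D| = #|S| ->
  #|[set x in D | Q (f x)]| = #|[set y in S | Q y]|.
Proof.
move=> f_inj fDS cDS; have fD : f @: D = S.
  apply/eqP; rewrite eqEcard card_imset // cDS leqnn andbT.
  by apply/subsetP => _ /imsetP[x xD ->]; apply: fDS.
rewrite -(card_imset _ f_inj); apply: eq_card => y; rewrite [RHS]inE -fD.
apply/imsetP/andP => [[x]|[/imsetP[x xD ->] Qfx]]; last by exists x; rewrite ?inE ?xD.
by rewrite inE => /andP[xD Qfx] ->; rewrite imset_f.
Qed.

Section CountAlongPath.
Variables (e : rel T) (X V : {set T}) (u v : T) (s : seq T) (Q : pred T).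
Hypotheses (B : bipartition e X) (hs : ham_path e V u v s).
Hypothesis balanced : #|V :&: X| = #|V :\: X|.

Lemma count_next_X : v \notin X ->
  #|[set x in V :&: X | Q (next (u :: s) x)]| = #|[set y in V :\: X | Q y]|.
Proof.
move=> vX; have [U _ _ _] := hs; apply: card_sep_inj balanced; first exact: can_inj (prev_next U).
move=> x /setIP[xV xX]; have xv : x != v by apply: contraNneq vX => <-.
by have [nV _ nX] := ham_path_next B hs xV xv; rewrite inE nX xX.
Qed.

Lemma count_next_notX : u \in V :&: X -> v \in V :\: X ->
  #|[set x in (V :\: X) :\ v | Q (next (u :: s) x)]| = #|[set y in (V :&: X) :\ u | Q y]|.
Proof.
move=> uA vB; have [U _ _ _] := hs; apply: card_sep_inj; first exact: can_inj (prev_next U).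
  move=> x /setD1P[xv /setDP[xV xX]].
  by have [nV nu nX] := ham_path_next B hs xV xv; rewrite !inE nu nV nX xX.
by move: balanced; rewrite (cardsD1 u (V :&: X)) (cardsD1 v (V :\: X)) uA vB => /addnI.
Qed.

End CountAlongPath.

Lemma nbrs_bipartition e X u :
  bipartition e X -> u \in X -> [set y | e u y] = [set y in ~: X | e u y].
Proof.
move=> B uX; apply/setP => y; rewrite !inE andb_idl // => euy.
by rewrite (bipartition_adjN B euy) uX.
Qed.

Lemma deg_in_setD1 e S x w : deg_in e S x <= (deg_in e (S :\ w) x).+1.
Proof.
rewrite /deg_in (cardsD1 w [set y in S | e x y]).
have -> : [set y in S | e x y] :\ w = [set y in S :\ w | e x y].
  by apply/setP => y; rewrite !inE andbA.
by case: (w \in _).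
Qed.

Lemma setD_pairI X V a b : b \notin X -> (V :\: [set a; b]) :&: X = (V :&: X) :\ a.
Proof.
move=> bX; apply/setP => z; rewrite !inE.
have [->|_] := eqVneq z a; first by [].
by have [->|_] := eqVneq z b; rewrite ?(negbTE bX) ?andbF.
Qed.

Lemma setD_pairD X V a b : a \in X -> (V :\: [set a; b]) :\: X = (V :\: X) :\ b.
Proof.
move=> aX; apply/setP => z; rewrite !inE.
have [->|_] := eqVneq z b; first by rewrite orbT andbF.
by have [->|_] := eqVneq z a; rewrite ?aX ?andbF.
Qed.

Lemma single_edge_in a b x y x' y' s :
  single_edge a b x y -> single_edge a b x' y' -> x' \in s -> y' \in s -> x \in s.
Proof. by move=> /orP[] /andP[/eqP-> _] /orP[] /andP[/eqP-> /eqP->] => *. Qed.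

Lemma ham_path_add_edge e V a b u v s :
  ham_path (add_edge e a b) V u v s -> ~~ path e u s ->
  exists l r0 r, [/\ s = l ++ r0 :: r, path e u l, path e r0 r
                   & single_edge a b (last u l) r0].
Proof.
move=> [U _ P _] /negP es; have [//|[l [r0 [r [sE pl lr0 pr]]]]] := path_or_split P.
exists l, r0, r; split=> //.
have [//|[l' [r0' [r' [rE _ lr0' _]]]]] := path_or_split pr; exfalso.
have l_in : last u l \in r0 :: r.
  apply: single_edge_in lr0 lr0' _ _; rewrite rE -cat_cons ?mem_cat ?mem_last //.
  by rewrite inE mem_head orbT.
move: U; rewrite sE -cat_cons cat_uniq => /and3P[_ /hasPn/(_ _ l_in)].
by rewrite mem_last.
Qed.

Lemma ham_path_reroute e e' V u v s l r0 r p :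
  symmetric e -> irreflexive e -> ham_path e' V u v s -> s = l ++ r0 :: r ->
  path e u l -> path e r0 r -> p \in V -> p != v ->
  e (last u l) p -> e r0 (next (u :: s) p) -> exists s', ham_path e V u v s'.
Proof.
move=> e_sym e_irr hs sE pl pr pV pv e1 e2; have [U M _ L] := hs.
have ps : p \in u :: s by rewrite M.
have p_last : p != last u s by rewrite L.
have [s1 [s2 [s12 s1p]]] := split_next U ps p_last.
have s12' : l ++ r0 :: r = s1 ++ next (u :: s) p :: s2 by rewrite -sE.
rewrite -s1p in e1; have [s' ps' [ls' ss']] := path_crossover e_sym e_irr s12' pl pr e1 e2.
by exists s'; apply: ham_path_perm hs _ ps' _; rewrite ?sE // ls' -sE.
Qed.

Lemma ham_biconnected_add_edge e X V a b :
  symmetric e -> bipartition e X -> #|V :&: X| = #|V :\: X| ->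
  a \in V :&: X -> b \in V :\: X -> ~~ e a b ->
  #|V :&: X|.+2 <= deg_in e (V :\: X) a + deg_in e (V :&: X) b ->
  ham_biconnected (add_edge e a b) X V -> ham_biconnected e X V.
Proof.
move=> e_sym B bal aA bB nab deg H u v uA vB; have [s hs] := H u v uA vB.
have [es|/(ham_path_add_edge hs)[l [r0 [r [sE pl pr lr0]]]]] := boolP (path e u s).
  by exists s; case: hs.
have reroute := ham_path_reroute e_sym (bipartition_irr B) hs sE pl pr.
have B' : bipartition (add_edge e a b) X.
  by apply: bipartition_add_edge; [|case/setIP: aA|case/setDP: bB].
case/orP: lr0 reroute => /andP[/eqP-> /eqP->] reroute.
- have [p /setD1P[pv /setDP[pV _]] /andP[ap bp]] :
      exists2 p, p \in (V :\: X) :\ v & e a p && e b (next (u :: s) p).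
    apply: sep_overlap; rewrite (count_next_notX _ B' hs bal uA vB).
    have := deg_in_setD1 e (V :\: X) a v; have := deg_in_setD1 e (V :&: X) b u.
    move: deg; rewrite bal /deg_in (cardsD1 v (V :\: X)) vB; lia.
  exact: reroute pV pv ap bp.
- have [p /setIP[pV pX] /andP[bp ap]] :
      exists2 p, p \in V :&: X & e b p && e a (next (u :: s) p).
    apply: sep_overlap; rewrite (count_next_X _ B' hs bal (setDP vB).2).
    move: deg; rewrite /deg_in; lia.
  by apply: reroute pV _ bp ap; apply: contraTneq pX => ->; case/setDP: vB.
Qed.

Lemma ham_path_insert e V a b u v s p :
  symmetric e -> ham_path e (V :\: [set a; b]) u v s -> a \in V -> b \in V -> a != b ->
  p \in V :\: [set a; b] -> p != v -> e a b -> e b p -> e a (next (u :: s) p) ->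
  exists s', ham_path e V u v s'.
Proof.
move=> e_sym hs aV bV ab pV pv eab ebp ean; have [U M P L] := hs.
have ps : p \in u :: s by rewrite M.
have p_last : p != last u s by rewrite L.
have [s1 [s2 [sE s1p]]] := split_next U ps p_last.
set q := next (u :: s) p in sE ean.
exists (s1 ++ [:: b, a, q & s2]); apply: (ham_path_add2 hs) => //.
- by rewrite sE (perm_catCA (u :: s1) [:: b; a]) (perm_catCA [:: b] [:: a]).
- move: P; rewrite sE !cat_path s1p /= => /andP[-> /andP[_ ->]].
  by rewrite e_sym ebp (e_sym b) eab ean.
- by rewrite -L sE !last_cat.
Qed.

Lemma deg_in_le e S x : deg_in e S x <= #|S|.
Proof. by apply/subset_leq_card/subsetP => y; rewrite inE => /andP[]. Qed.

Lemma card_gt1_neq S w : 1 < #|S| -> exists2 x, x \in S & x != w.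
Proof.
rewrite (cardsD1 w S) => S1; have : 0 < #|S :\ w| by move: S1; case: (_ \in _); lia.
by rewrite card_gt0 => /set0Pn[x /setD1P[xw xS]]; exists x.
Qed.

Lemma ham_biconnected_absorb e X V a b :
  symmetric e -> bipartition e X -> #|V :&: X| = #|V :\: X| ->
  a \in V :&: X -> b \in V :\: X -> e a b ->
  #|V :&: X|.+2 <= deg_in e (V :\: X) a + deg_in e (V :&: X) b ->
  ham_biconnected e X (V :\: [set a; b]) -> ham_biconnected e X V.
Proof.
move=> e_sym B bal aA bB eab deg H u v uA vB.
have da : 1 < deg_in e (V :\: X) a by have := deg_in_le e (V :&: X) b; lia.
have db : 1 < deg_in e (V :&: X) b by have := deg_in_le e (V :\: X) a; rewrite -bal; lia.
have [[aV aX] [bV bX]] := (setIP aA, setDP bB).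
have ab : a != b by apply: contraNneq bX => <-.
have A' := setD_pairI V a bX; have B' := setD_pairD V b aX.
have in_A' x : x \in V :&: X -> x != a -> x \in (V :\: [set a; b]) :&: X.
  by move=> xA xa; rewrite A' in_setD1 xa xA.
have in_B' y : y \in V :\: X -> y != b -> y \in (V :\: [set a; b]) :\: X.
  by move=> yB yb; rewrite B' in_setD1 yb yB.
have [x /setIdP[xA bx] xa] := card_gt1_neq a db.
have [y /setIdP[yB ay] yb] := card_gt1_neq b da.
have [->|ua] := eqVneq u a; have [->|vb] := eqVneq v b.
- have [s hs] := H x y (in_A' x xA xa) (in_B' y yB yb).
  exists (rev (x :: s) ++ [:: b]); apply: (ham_path_add2 hs) => //.
  + by rewrite perm_cons -cat1s perm_catC /= perm_cons perm_rev.
  + by have [_ _ P L] := hs; rewrite path_rev_cat // L ay P /= e_sym bx.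
  + by rewrite last_cat.
- have [s hs] := H x v (in_A' x xA xa) (in_B' v vB vb).
  exists (b :: x :: s); apply: (ham_path_add2 hs) => //.
  + by have [_ _ P _] := hs; rewrite /= eab bx P.
  + by case: hs.
- have [s hs] := H u y (in_A' u uA ua) (in_B' y yB yb).
  exists (s ++ [:: a; b]); apply: (ham_path_add2 hs) => //.
  + by rewrite -cat_cons perm_catC.
  + by have [_ _ P L] := hs; rewrite cat_path P L /= e_sym ay eab.
  + by rewrite last_cat.
have [s hs] := H u v (in_A' u uA ua) (in_B' v vB vb).
have bal' : #|(V :\: [set a; b]) :&: X| = #|(V :\: [set a; b]) :\: X|.
  by move: bal; rewrite A' B' (cardsD1 a (V :&: X)) (cardsD1 b (V :\: X)) aA bB => /addnI.
have [p /setIP[pV pX] /andP[bp ap]] :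
    exists2 p, p \in (V :\: [set a; b]) :&: X & e b p && e a (next (u :: s) p).
  apply: sep_overlap; rewrite (count_next_X _ B hs bal' (setDP vB).2) A' B'.
  have := deg_in_setD1 e (V :&: X) b a; have := deg_in_setD1 e (V :\: X) a b.
  move: deg; rewrite /deg_in (cardsD1 a (V :&: X)) aA; clear; lia.
apply: ham_path_insert e_sym hs aV bV ab pV _ eab bp ap.
by apply: contraTneq pX => ->; case/setDP: vB.
Qed.

Lemma deg_add_nondeg e S x : deg_in e S x + nondeg_in e S x = #|S|.
Proof.
rewrite /deg_in /nondeg_in -(cardsID [set y | e x y] S); congr (_ + _);
  by apply: eq_card => y; rewrite !inE andbC.
Qed.

Lemma card_sep_sum S (P : pred T) : #|[set y in S | P y]| = \sum_(y in S) P y.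
Proof.
rewrite -sum1_card big_mkcond [RHS]big_mkcond /=.
by apply: eq_bigr => y _; rewrite !inE; case: (y \in S); case: (P y).
Qed.

Lemma leq_sum_subset S S' (f : T -> nat) :
  S \subset S' -> \sum_(i in S) f i <= \sum_(i in S') f i.
Proof. by move=> sub; rewrite [X in _ <= X](big_setID S) /= (setIidPr sub) leq_addr. Qed.

Section Nonedges.
Variables (e : rel T) (A B : {set T}).
Hypothesis e_sym : symmetric e.

Lemma nonedgesC : nonedges e B A = nonedges e A B.
Proof.
rewrite /nonedges /nondeg_in; under eq_bigr => b _ do rewrite card_sep_sum.
rewrite exchange_big /=; apply: eq_bigr => a _; rewrite card_sep_sum.
by apply: eq_bigr => b _; rewrite e_sym.
Qed.

Lemma nonedges_setD1 a b : a \in A -> b \in B -> e a b ->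
  nonedges e A B = nondeg_in e B a + nondeg_in e A b + nonedges e (A :\ a) (B :\ b).
Proof.
move=> aA bB eab; rewrite /nonedges (bigD1 a) //= -addnA; congr (_ + _).
have split_b a' : nondeg_in e B a' = ~~ e a' b + nondeg_in e (B :\ b) a'.
  rewrite /nondeg_in (cardsD1 b [set z in B | ~~ e a' z]) inE bB /=.
  by congr (_ + _); apply: eq_card => z; rewrite !inE andbA.
rewrite (eq_bigr _ (fun a' _ => split_b a')) big_split /=; congr (_ + _).
  rewrite /nondeg_in card_sep_sum [RHS](bigD1 a) //= [e b a]e_sym eab add0n.
  by apply: eq_bigr => a' _; rewrite e_sym.
by apply: eq_bigl => a'; rewrite in_setD1 andbC.
Qed.

End Nonedges.

Definition degree_closed e A B m := forall a b, a \in A -> b \in B -> ~~ e a b ->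
  deg_in e B a + deg_in e A b <= m.+1.

(* The complete case is needed for m = 1, where no t satisfies the count. *)
Definition edge_condition e A B m :=
  (forall a b, a \in A -> b \in B -> e a b) \/
  exists2 t, 0 < t & [/\ forall a, a \in A -> t <= deg_in e B a,
                         forall b, b \in B -> t <= deg_in e A b
                       & nonedges e A B < t * (m - t)].

Definition absorbable e A B m a b :=
  [/\ a \in A, b \in B, e a b, m.+2 <= deg_in e B a + deg_in e A b
    & edge_condition e (A :\ a) (B :\ b) m.-1].

Section Symmetry.
Variables (e : rel T) (A B : {set T}) (m : nat).
Hypothesis e_sym : symmetric e.

Lemma degree_closedC : degree_closed e A B m -> degree_closed e B A m.
Proof. by move=> dclosed b a bB aA nba; rewrite addnC dclosed // e_sym. Qed.

Lemma edge_conditionC : edge_condition e A B m -> edge_condition e B A m.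
Proof.
case=> [AB|[t t_gt0 [dA dB few]]]; first by left=> b a bB aA; rewrite e_sym AB.
by right; exists t => //; split => //; rewrite nonedgesC.
Qed.

End Symmetry.

Lemma absorbableC e A B m a b : symmetric e -> absorbable e A B m a b -> absorbable e B A m b a.
Proof.
move=> e_sym [aA bB eab deg cond]; split; rewrite 1?e_sym 1?addnC //.
exact: edge_conditionC.
Qed.

Section TightVertex.
Variables (e : rel T) (A B : {set T}) (m t : nat).
Hypotheses (e_sym : symmetric e) (cA : #|A| = m) (cB : #|B| = m).
Hypotheses (dclosed : degree_closed e A B m) (t_gt0 : 0 < t).
Hypothesis degA : forall a, a \in A -> t <= deg_in e B a.
Hypothesis degB : forall b, b \in B -> t <= deg_in e A b.
Hypothesis few : nonedges e A B < t * (m - t).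
Variable y : T.
Hypotheses (yB : y \in B) (dy : deg_in e A y = t).

Lemma tight_nondeg : nondeg_in e A y = m - t.
Proof. by have := deg_add_nondeg e A y; rewrite dy cA; lia. Qed.

Lemma tight_bounds : 1 < t /\ t < m.
Proof.
have : m - t <= nonedges e A B.
  by rewrite -nonedgesC // /nonedges (bigD1 y) //= tight_nondeg leq_addr.
by move: few; clear; nia.
Qed.

Lemma tight_nbr_nondeg x : x \in A -> e x y -> (nondeg_in e B x).+2 <= t.
Proof.
move=> xA exy; have [t_gt1 t_lt_m] := tight_bounds; set s := nondeg_in e B x.
have s_le : s <= m - t by have := degA xA; have := deg_add_nondeg e B x; rewrite cB; lia.
rewrite leqNgt; apply/negP => s_ge; set S := [set b in B | ~~ e x b].
have yS : y \notin S by rewrite inE exy andbF.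
have nondegS b : b \in S -> m.-1 - s <= nondeg_in e A b.
  rewrite inE => /andP[bB nxb]; have := dclosed xA bB nxb.
  have := deg_add_nondeg e B x; have := deg_add_nondeg e A b; rewrite cA cB -/s; lia.
have : \sum_(b in y |: S) nondeg_in e A b <= nonedges e A B.
  rewrite -nonedgesC //; apply: leq_sum_subset.
  by apply/subsetP => b /setU1P[->|]; rewrite // inE => /andP[].
rewrite big_setU1 //= tight_nondeg => sum_le.
have : #|S| * (m.-1 - s) <= \sum_(b in S) nondeg_in e A b.
  by rewrite -sum_nat_const; apply: leq_sum.
have -> : #|S| = s by [].
by move: few sum_le s_ge s_le t_gt1 t_lt_m; clear; nia.
Qed.

Lemma tight_absorbable : exists x, absorbable e A B m x y.
Proof.
have [t_gt1 t_lt_m] := tight_bounds.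
have : 0 < deg_in e A y by rewrite dy.
rewrite card_gt0 => /set0Pn[x /setIdP[xA eyx]]; rewrite e_sym in eyx.
have s_lt := tight_nbr_nondeg xA eyx; have dx := deg_add_nondeg e B x.
exists x; split => //; first by rewrite dy; move: s_lt dx; rewrite cB; lia.
right; exists t.-1; first by move: t_gt1; clear; lia.
split.
- move=> a /setD1P[_ aA]; have := degA aA; have := deg_in_setD1 e B a y; lia.
- move=> b /setD1P[_ bB]; have := degB bB; have := deg_in_setD1 e A b x; lia.
- have := nonedges_setD1 e_sym xA yB eyx; rewrite tight_nondeg.
  by move: few t_gt1 t_lt_m; clear; nia.
Qed.

End TightVertex.

Lemma complete_absorbable e A B m : symmetric e -> #|A| = m -> #|B| = m -> 1 < m ->
  (forall a b, a \in A -> b \in B -> e a b) -> exists a b, absorbable e A B m a b.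
Proof.
move=> e_sym cA cB m_gt1 AB.
have [a aA] : exists a, a \in A by apply/set0Pn; rewrite -card_gt0 cA; lia.
have [b bB] : exists b, b \in B by apply/set0Pn; rewrite -card_gt0 cB; lia.
have full S x : (forall y, y \in S -> e x y) -> deg_in e S x = #|S|.
  by move=> Sx; apply: eq_card => y; rewrite inE; apply/andb_idr/Sx.
have da : deg_in e B a = m by rewrite -cB full // => y; apply: AB.
have db : deg_in e A b = m by rewrite -cA full // => y yA; rewrite e_sym AB.
exists a, b; split; rewrite ?AB ?da ?db //; first lia.
by left=> a' b' /setD1P[_ a'A] /setD1P[_ b'B]; apply: AB.
Qed.

Lemma raise_lower_bound S (d : T -> nat) t :
  (forall x, x \in S -> t <= d x) -> ~~ [exists x in S, d x == t] ->
  forall x, x \in S -> t < d x.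
Proof. by move=> le_td /exists_inPn ne_dt x xS; rewrite ltn_neqAle eq_sym ne_dt ?le_td. Qed.

Lemma absorbable_or_raise e A B m t :
  symmetric e -> #|A| = m -> #|B| = m -> 1 < m -> degree_closed e A B m -> 0 < t ->
  (forall a, a \in A -> t <= deg_in e B a) -> (forall b, b \in B -> t <= deg_in e A b) ->
  nonedges e A B < t * (m - t) ->
  (exists a b, absorbable e A B m a b) \/
  [/\ (2 * t).+1 <= m, (forall a, a \in A -> t.+1 <= deg_in e B a),
      (forall b, b \in B -> t.+1 <= deg_in e A b) & nonedges e A B < t.+1 * (m - t.+1)].
Proof.
move=> e_sym cA cB m_gt1 dclosed t_gt0 dA dB few.
have [/exists_inP[b bB /eqP db]|/(raise_lower_bound dB) dB'] :=
  boolP [exists b in B, deg_in e A b == t].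
  by left; have [a] := tight_absorbable e_sym cA cB dclosed t_gt0 dA dB few bB db; exists a, b.
have [/exists_inP[a aA /eqP da]|/(raise_lower_bound dA) dA'] :=
  boolP [exists a in A, deg_in e B a == t].
  left; have few' : nonedges e B A < t * (m - t) by rewrite nonedgesC.
  have [b /(absorbableC e_sym) ab] :=
    tight_absorbable e_sym cB cA (degree_closedC e_sym dclosed) t_gt0 dB dA few' aA da.
  by exists a, b.
have [m_ge|m_lt] := leqP (2 * t).+1 m; first by right; split=> //; move: few m_ge; clear; nia.
left; apply: complete_absorbable e_sym cA cB m_gt1 _ => a b aA bB; apply/negPn/negP => nab.
by have := dclosed a b aA bB nab; have := dA' a aA; have := dB' b bB; move: m_lt; clear; lia.
Qed.

Lemma exists_absorbable e A B m :
  symmetric e -> #|A| = m -> #|B| = m -> 1 < m ->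
  degree_closed e A B m -> edge_condition e A B m -> exists a b, absorbable e A B m a b.
Proof.
move=> e_sym cA cB m_gt1 dclosed [AB|[t t_gt0 [dA dB few]]].
  exact: complete_absorbable e_sym cA cB m_gt1 AB.
have [k] := ubnP (m - t); elim: k => // k IH in t t_gt0 dA dB few *; move=> mt_lt.
have [//|[m_ge dA' dB' few']] := absorbable_or_raise e_sym cA cB m_gt1 dclosed t_gt0 dA dB few.
by apply: (IH t.+1) => //; move: m_ge mt_lt; clear; lia.
Qed.

Lemma deg_in_add_edge e a b S x : deg_in e S x <= deg_in (add_edge e a b) S x.
Proof.
by apply/subset_leq_card/subsetP => y; rewrite !inE => /andP[-> exy]; rewrite /add_edge /= exy.
Qed.

Lemma nondeg_in_add_edge e a b S x : nondeg_in (add_edge e a b) S x <= nondeg_in e S x.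
Proof.
by apply/subset_leq_card/subsetP => y; rewrite !inE /add_edge /= negb_or => /and3P[-> ->].
Qed.

Lemma nonedges_add_edge e A B a b : a \in A -> b \in B -> ~~ e a b ->
  nonedges (add_edge e a b) A B < nonedges e A B.
Proof.
move=> aA bB nab; rewrite /nonedges (bigD1 a) //= [X in _ < X](bigD1 a) //= -addSn.
apply: leq_add; last by apply: leq_sum => a' _; apply: nondeg_in_add_edge.
rewrite /nondeg_in (cardsD1 b [set y in B | ~~ e a y]) inE bB nab ltnS.
apply/subset_leq_card/subsetP => y; rewrite !inE /add_edge /= !negb_or eqxx /=.
by case/andP=> yB /and3P[nay yb _]; rewrite yB nay yb.
Qed.

Lemma edge_condition_add_edge e A B m a b :
  edge_condition e A B m -> edge_condition (add_edge e a b) A B m.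
Proof.
case=> [AB|[t t_gt0 [dA dB few]]]; first by left=> x y xA yB; rewrite /add_edge /= AB.
right; exists t => //; split.
- by move=> x /dA /leq_trans; apply; apply: deg_in_add_edge.
- by move=> y /dB /leq_trans; apply; apply: deg_in_add_edge.
- by apply: leq_ltn_trans few; apply: leq_sum => x _; apply: nondeg_in_add_edge.
Qed.

Lemma ham_biconnected_K11 e X V : #|V :&: X| = 1 -> #|V :\: X| = 1 ->
  (forall a b, a \in V :&: X -> b \in V :\: X -> e a b) -> ham_biconnected e X V.
Proof.
move=> /eqP/cards1P[a Ea] /eqP/cards1P[b Eb] AB u v; rewrite Ea Eb !inE => /eqP-> /eqP->.
have [aX bX] : a \in X /\ b \notin X.
  by have := set11 a; have := set11 b; rewrite -{1}Ea -Eb => /setDP[_ ->] /setIP[].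
exists [:: b]; split=> //=.
- by rewrite inE andbT; apply: contraTneq aX => ->.
- by move=> x; rewrite -(setID V X) Ea Eb !inE.
- by rewrite AB // ?Ea ?Eb set11.
Qed.

Theorem ham_biconnected_edge_condition e X V m :
  symmetric e -> bipartition e X -> #|V :&: X| = m -> #|V :\: X| = m -> 0 < m ->
  edge_condition e (V :&: X) (V :\: X) m -> ham_biconnected e X V.
Proof.
elim: m e V => // m IHm e V e_sym B cA cB _.
have [n] := ubnP (nonedges e (V :&: X) (V :\: X)).
elim: n => // n IHn in e e_sym B *; move=> ne_lt cond.
have [/exists_inP[a aA /exists_inP[b bB /andP[nab deg]]]|not_closable] :=
  boolP [exists a in V :&: X, exists b in V :\: X,
           ~~ e a b && (m.+3 <= deg_in e (V :\: X) a + deg_in e (V :&: X) b)].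
  apply: (ham_biconnected_add_edge e_sym B _ aA bB nab); rewrite ?cA ?cB //.
  apply: IHn; [exact: symmetric_add_edge | | | exact: edge_condition_add_edge].
    by apply: bipartition_add_edge; [|case/setIP: aA|case/setDP: bB].
  by have := nonedges_add_edge aA bB nab; lia.
have dclosed : degree_closed e (V :&: X) (V :\: X) m.+1.
  move=> a b aA bB nab; rewrite leqNgt; apply: contra not_closable => deg.
  by apply/exists_inP; exists a => //; apply/exists_inP; exists b; rewrite // nab.
case: m IHm cA cB cond dclosed {IHn not_closable} => [|m] IHm cA cB cond dclosed.
  by apply: ham_biconnected_K11 cA cB _; case: cond => [//|[t t_gt0 [_ _]]]; lia.
have [a [b [aA bB eab deg cond']]] := exists_absorbable e_sym cA cB (isT : 1 < m.+2) dclosed cond.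
apply: (ham_biconnected_absorb e_sym B _ aA bB eab); rewrite ?cA ?cB //.
have [[_ aX] [_ bX]] := (setIP aA, setDP bB).
apply: IHm; rewrite ?setD_pairI ?setD_pairD //.
- by move: cA; rewrite (cardsD1 a) aA add1n => -[].
- by move: cB; rewrite (cardsD1 b) bB add1n => -[].
Qed.

Lemma nonedges_subset e A A' B B' :
  A \subset A' -> B \subset B' -> nonedges e A B <= nonedges e A' B'.
Proof.
move=> sA sB; apply: leq_trans (leq_sum_subset _ sA); apply: leq_sum => a _.
by apply/subset_leq_card/subsetP => y; rewrite !inE => /andP[/(subsetP sB) -> ->].
Qed.

Lemma nbrs_sub_compl e X x : bipartition e X -> x \in X -> [set y | e x y] \subset ~: X.
Proof. by move=> B xX; rewrite (nbrs_bipartition B xX); apply/subsetP => y /setIdP[]. Qed.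

Lemma deg_le_deg_in_setC e S W x : [set y | e x y] \subset S ->
  #|[set y | e x y]| <= deg_in e (~: W :&: S) x + #|W :&: S|.
Proof.
move=> sub; apply: leq_trans (leq_card_setU _ _); apply/subset_leq_card/subsetP => y yx.
have yS := subsetP sub y yx; rewrite inE in yx.
by rewrite !inE yS yx andbT; case: (y \in W).
Qed.

Lemma setC_sides_card X W n p :
  #|X| = n -> #|~: X| = n -> #|W :&: X| = #|W :&: ~: X| -> #|W| = (2 * p)%N ->
  [/\ #|W :&: X| = p, #|~: W :&: X| = n - p & #|~: W :\: X| = n - p].
Proof.
move=> cX cY cW sW.
have := cardsID X W; have := cardsID W X; have := cardsID W (~: X).
have -> : W :\: X = W :&: ~: X by rewrite setDE.
have -> : X :\: W = ~: W :&: X by rewrite setDE setIC.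
have -> : ~: X :\: W = ~: W :\: X by rewrite !setDE setIC.
by rewrite [X :&: W]setIC [~: X :&: W]setIC; split; lia.
Qed.

Lemma ham_biconnected_minus_setC e X W :
  ham_biconnected e X (~: W) -> ham_biconnected_minus e X W.
Proof.
move=> H u v uXW vYW.
have uA : u \in ~: W :&: X by move: uXW; rewrite !inE.
have vB : v \in ~: W :\: X by move: vYW; rewrite !inE andbC.
by have [s [U M P L]] := H u v uA vB; exists s; split=> // x; rewrite M inE.
Qed.

Lemma edge_condition_setC e X W n k p :
  bipartition e X -> min_deg_ge e k -> #|W :&: X| = p -> #|W :&: ~: X| = p -> (p < k <= n)%N ->
  (forall a b, a \in X -> b \notin X -> e a b) \/ (nonedges e X (~: X) < (k - p) * (n - k))%N ->
  edge_condition e (~: W :&: X) (~: W :\: X) (n - p).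
Proof.
move=> B mindeg cWX cWY /andP[p_lt_k k_le_n] [complete|few].
  by left=> a b /setIP[_ aX] /setDP[_ bX]; apply: complete.
right; exists (k - p)%N; first by lia.
split.
- move=> a /setIP[_ aX]; have := deg_le_deg_in_setC W (nbrs_sub_compl B aX).
  by rewrite -setDE cWY; have := mindeg a; lia.
- move=> b /setDP[_ bX]; rewrite -in_setC in bX.
  have := deg_le_deg_in_setC W (nbrs_sub_compl (bipartitionC B) bX).
  by rewrite setCK cWX; have := mindeg b; lia.
- have -> : (n - p - (k - p) = n - k)%N by lia.
  apply: leq_ltn_trans few; apply: nonedges_subset; first exact: subsetIr.
  by rewrite setDE subsetIr.
Qed.

Definition edge_count e X : nat :=
  \sum_(u in X) #|[set y | e u y]|.

Lemma edge_countC e X :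
  symmetric e -> bipartition e X -> edge_count e (~: X) = edge_count e X.
Proof.
move=> e_sym B; rewrite /edge_count.
under eq_bigr => v vX do rewrite (nbrs_bipartition (bipartitionC B) vX) setCK card_sep_sum.
under [RHS]eq_bigr => u uX do rewrite (nbrs_bipartition B uX) card_sep_sum.
by rewrite exchange_big; apply: eq_bigr => u _; apply: eq_bigr => v _; rewrite e_sym.
Qed.

Lemma edge_count_gt0 e X u :
  (forall t, 0 < #|[set y | e t y]|)%N -> u \in X -> (0 < edge_count e X)%N.
Proof. by move=> deg_gt0 uX; rewrite /edge_count (bigD1 u) //= ltn_addr. Qed.

Lemma edge_count_add_nonedges e X :
  bipartition e X -> (edge_count e X + nonedges e X (~: X) = #|X| * #|~: X|)%N.
Proof.
move=> B; rewrite /edge_count /nonedges -big_split /= -sum_nat_const.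
by apply: eq_bigr => u uX; rewrite (nbrs_bipartition B uX) deg_add_nondeg.
Qed.

End BipartiteHamilton.

(** * The spectral bound *)

Local Open Scope ring_scope.

Lemma sqr_sum_le (R : realFieldType) (I : finType) (S : {set I}) (f : I -> R) :
  (\sum_(i in S) f i) ^+ 2 <= #|S|%:R * \sum_(i in S) f i ^+ 2.
Proof.
have am_gm i j : f i * f j <= (f i ^+ 2 + f j ^+ 2) / 2.
  by have := sqr_ge0 (f i - f j); nra.
rewrite expr2 big_distrl /=.
apply: (@le_trans _ _ (\sum_(i in S) \sum_(j in S) (f i ^+ 2 + f j ^+ 2) / 2)).
  by apply: ler_sum => i _; rewrite big_distrr /=; apply: ler_sum => j _; apply: am_gm.
have -> : \sum_(i in S) \sum_(j in S) (f i ^+ 2 + f j ^+ 2) / 2 =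
    (\sum_(i in S) (f i ^+ 2 *+ #|S| + \sum_(j in S) f j ^+ 2)) / 2.
  rewrite big_distrl /=; apply: eq_bigr => i _.
  by rewrite -big_distrl /= big_split /= sumr_const.
rewrite big_split /= sumrMnl sumr_const -mulr_natl -[_ *+ _]mulr_natl.
lra.
Qed.

Lemma sup_lt_of_roots (R : realType) (S : set R) (p : {poly R}) (c : R) :
  p != 0 -> (forall a, S a -> root p a) -> (forall a, S a -> a < c) -> 0 < c ->
  sup S < c.
Proof.
move=> p0 Sp Sc c_gt0.
have [S0|S0] := pselect (S !=set0)%classic; last by rewrite sup_out // => -[].
set M := \big[Num.max/0]_(r <- rootsR p | r < c) r.
apply: (@le_lt_trans _ _ M).
  apply: ge_sup => // a Sa; apply: le_bigmax_seq; last exact: Sc.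
  by rewrite -(roots_on_rootsR p0) Sp.
by apply: (big_ind (fun y => y < c)) => // y z; rewrite gt_max => -> ->.
Qed.

Section EigenvectorSide.
Variables (R : realFieldType) (T : finType) (e : rel T) (X : {set T}).
Variables (x : T -> R) (a : R).
Hypothesis B : bipartition e X.
Hypothesis eig : forall t, a * x t = \sum_(s in [set y | e t y]) x s.

Let nonnbr_mass := \sum_(u in X) #|[set y | e u y]|%:R * \sum_(s in ~: X | ~~ e u s) x s ^+ 2.

Lemma nonnbr_mass_ge0 : 0 <= nonnbr_mass.
Proof. by apply: sumr_ge0 => u _; rewrite mulr_ge0 ?ler0n ?sumr_ge0 // => s _; apply: sqr_ge0. Qed.

Lemma eigen_side_le :
  a ^+ 2 * \sum_(u in X) x u ^+ 2 + nonnbr_mass <=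
    (edge_count e X)%:R * \sum_(s in ~: X) x s ^+ 2.
Proof.
rewrite /edge_count natr_sum mulr_sumr mulr_suml -big_split /=; apply: ler_sum => u uX.
have := sqr_sum_le [set y | e u y] x; rewrite -eig exprMn => cs.
rewrite [X in _ <= _ * X](bigID (e u)) /= mulrDr lerD2r (le_trans cs) //.
rewrite (nbrs_bipartition B uX).
suff -> : \sum_(s in [set y in ~: X | e u y]) x s ^+ 2 = \sum_(s in ~: X | e u s) x s ^+ 2 by [].
by apply: eq_bigl => s; rewrite inE.
Qed.

Hypothesis deg_gt0 : forall t, (0 < #|[set y | e t y]|)%N.
Hypothesis mass0 : nonnbr_mass = 0.

Lemma nonnbr_vanish u s : u \in X -> s \notin X -> ~~ e u s -> x s = 0.
Proof.
move=> uX sX nus; apply/eqP; rewrite -sqrf_eq0; apply/eqP.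
have term_ge0 v : 0 <= #|[set y | e v y]|%:R * \sum_(s in ~: X | ~~ e v s) x s ^+ 2.
  by rewrite mulr_ge0 ?ler0n ?sumr_ge0 // => s' _; apply: sqr_ge0.
have /eqP := psumr_eq0P (fun v _ => term_ge0 v) mass0 uX.
rewrite mulf_eq0 pnatr_eq0 eqn0Ngt deg_gt0 /= => /eqP/psumr_eq0P -> //.
  by move=> s' _; apply: sqr_ge0.
by rewrite inE sX nus.
Qed.

Lemma eig_sum_compl u : u \in X -> a * x u = \sum_(s in ~: X) x s.
Proof.
move=> uX; rewrite eig (nbrs_bipartition B uX) big_set /= [RHS](bigID (e u)) /=.
by rewrite [X in _ = _ + X]big1 ?addr0 // => s /andP[]; rewrite inE; apply: nonnbr_vanish.
Qed.

End EigenvectorSide.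

Lemma eigenvalue_sqr_lt_edge_count (R : realFieldType) (T : finType) (e : rel T)
    (X : {set T}) (x : T -> R) (a : R) :
  symmetric e -> bipartition e X -> (forall t, (0 < #|[set y | e t y]|)%N) ->
  (exists u v, [/\ u \in X, v \notin X & ~~ e u v]) ->
  (forall t, a * x t = \sum_(s in [set y | e t y]) x s) -> (exists t, x t != 0) ->
  a ^+ 2 < (edge_count e X)%:R.
Proof.
move=> e_sym B deg_gt0 [u0 [v0 [u0X v0X nuv]]] eig [t0]; apply: contraNT.
rewrite -leNgt => aE; have BC := bipartitionC B.
have sX := eigen_side_le B eig; have sY := eigen_side_le BC eig.
have ZX_ge0 := nonnbr_mass_ge0 e X x; have ZY_ge0 := nonnbr_mass_ge0 e (~: X) x.
rewrite setCK (edge_countC e_sym B) in sY ZY_ge0.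
set al := \sum_(u in X) x u ^+ 2 in sX sY; set be := \sum_(u in ~: X) x u ^+ 2 in sX sY.
set ZX := \sum_(u in X) _ in sX ZX_ge0; set ZY := \sum_(u in ~: X) _ in sY ZY_ge0.
have al_ge0 : 0 <= al by apply: sumr_ge0 => i _; apply: sqr_ge0.
have be_ge0 : 0 <= be by apply: sumr_ge0 => i _; apply: sqr_ge0.
have prod : 0 <= (a ^+ 2 - (edge_count e X)%:R) * (al + be) by apply: mulr_ge0; lra.
have ZX0 : ZX = 0 by lra.
have ZY0 : ZY = 0 by lra.
have xu0 : x u0 = 0.
  apply: (nonnbr_vanish (X := ~: X) deg_gt0 _ (u := v0)); last by rewrite e_sym.
  - by rewrite setCK.
  - by rewrite inE.
  - by rewrite inE negbK.
have a_neq0 : a != 0.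
  apply: contraTneq aE => ->; rewrite expr0n /= -ltNge ltr0n /edge_count (bigD1 u0) //=.
  exact: ltn_addr.
have xX u : u \in X -> x u = 0.
  move=> uX; have := eig_sum_compl B eig deg_gt0 ZX0 uX.
  rewrite -(eig_sum_compl B eig deg_gt0 ZX0 u0X) xu0 mulr0 => /eqP.
  by rewrite mulf_eq0 (negbTE a_neq0) => /eqP.
have xall t : x t = 0.
  have [/xX //|tX] := boolP (t \in X).
  have /eqP := eig t; rewrite big1 => [|s]; last first.
    by rewrite inE => ets; apply: xX; rewrite (bipartition_adjN B ets) tX.
  by rewrite mulf_eq0 (negbTE a_neq0) => /eqP.
by rewrite xall eqxx.
Qed.

Lemma eigenvalue_adj_mx (R : fieldType) (T : finType) (e : rel T) (a : R) :
  symmetric e -> eigenvalue (adj_mx R e) a ->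
  exists2 x : T -> R,
    forall t, a * x t = \sum_(s in [set y | e t y]) x s & exists t, x t != 0.
Proof.
move=> e_sym /eigenvalueP[v Hv v_neq0]; exists (fun t => v 0 (enum_rank t)).
  move=> t; move/rowP: Hv => /(_ (enum_rank t)); rewrite !mxE => <-.
  rewrite (reindex enum_rank) /=; last first.
    by exists enum_val => s _; [exact: enum_rankK | exact: enum_valK].
  rewrite (bigID (e t)) /= [X in _ + X]big1 ?addr0 => [|s /negbTE nts]; last first.
    by rewrite /adj_mx mxE !enum_rankK e_sym nts mulr0.
  by apply: eq_big => [s|s ets]; rewrite ?inE // /adj_mx mxE !enum_rankK e_sym ets mulr1.
have [j vj|v_eq0] := pickP (fun j => v 0 j != 0); first by exists (enum_val j); rewrite enum_valK.
by case/eqP: v_neq0; apply/rowP => j; rewrite mxE; apply/eqP/negbFE/v_eq0.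
Qed.

Lemma spec_rad_lt_sqrt (R : realType) (T : finType) (e : rel T) (X : {set T}) :
  symmetric e -> bipartition e X -> (forall t, (0 < #|[set y | e t y]|)%N) ->
  (exists u v, [/\ u \in X, v \notin X & ~~ e u v]) ->
  spec_rad R e < Num.sqrt (edge_count e X)%:R.
Proof.
move=> e_sym B deg_gt0 nonedge.
have E_gt0 : (0 : R) < (edge_count e X)%:R.
  by case: nonedge => u [v [uX _ _]]; rewrite ltr0n /edge_count (bigD1 u) //= ltn_addr.
apply: (@sup_lt_of_roots _ _ (char_poly (adj_mx R e))); rewrite ?sqrtr_gt0 //.
- exact: monic_neq0 (char_poly_monic _).
- by move=> a; rewrite -eigenvalue_root_char.
move=> a /(eigenvalue_adj_mx e_sym)[x eig x_neq0].
have a2 := eigenvalue_sqr_lt_edge_count e_sym B deg_gt0 nonedge eig x_neq0.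
have [a_le0|a_gt0] := leP a 0; first by apply: le_lt_trans a_le0 _; rewrite sqrtr_gt0.
by rewrite -(ger0_norm (ltW a_gt0)) -sqrtr_sqr ltr_sqrt.
Qed.

Lemma complete_or_few_nonedges (R : realType) (T : finType) (e : rel T) (X : {set T})
    (n k p : nat) :
  symmetric e -> bipartition e X -> #|X| = n -> #|~: X| = n ->
  (forall t, 0 < #|[set y | e t y]|)%N -> (p <= k <= n)%N ->
  Num.sqrt (n%:R * (n%:R - k%:R + p%:R) + k%:R * (k%:R - p%:R)) <= spec_rad R e ->
  (forall a b, a \in X -> b \notin X -> e a b) \/
  (nonedges e X (~: X) < (k - p) * (n - k))%N.
Proof.
move=> e_sym B cX cY deg_gt0 /andP[pk kn] rho.
have [complete|] := boolP [forall a in X, forall b in ~: X, e a b].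
  left=> a b aX bX; move/forall_inP/(_ a aX)/forall_inP: complete.
  by apply; rewrite inE.
rewrite negb_forall_in => /exists_inP[u uX]; rewrite negb_forall_in => /exists_inP[v vY nuv].
have nonedge : exists u v, [/\ u \in X, v \notin X & ~~ e u v].
  by exists u, v; rewrite -in_setC.
right; have := le_lt_trans rho (spec_rad_lt_sqrt R e_sym B deg_gt0 nonedge).
rewrite ltr_sqrt ?ltr0n ?(edge_count_gt0 deg_gt0 uX) //.
rewrite -natrB // -natrD -natrB // -!natrM -natrD ltr_nat.
by have := edge_count_add_nonedges B; rewrite cX cY; nia.
Qed.

Unset Implicit Arguments.
Theorem corollary4p2 (R : realType) (T : finType) (e : rel T) (X : {set T})
    (n k p : nat) :
  simple_graph e -> bipartition e X ->
  #|X| = n -> #|~: X| = n ->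
  min_deg_ge e k ->
  (n0 k p <= n)%N ->
  (p.+1 <= k)%N ->
  Num.sqrt (n%:R * (n%:R - k%:R + p%:R) + k%:R * (k%:R - p%:R)) <= spec_rad R e ->
  ham_biconnected_2p e X p.
Proof.
move=> [e_sym _] B cX cY mindeg n0_le p_lt_k rho W cW sW.
have k_lt_n : (k < n)%N by move: n0_le; rewrite /n0; case: ifP => _; nia.
have deg_gt0 t : (0 < #|[set y | e t y]|)%N by apply: leq_trans (mindeg t); lia.
have [cWX cA cB] := setC_sides_card cX cY cW sW.
have pkn : (p <= k <= n)%N by rewrite (ltnW p_lt_k) (ltnW k_lt_n).
apply/ham_biconnected_minus_setC/(ham_biconnected_edge_condition (m := (n - p)%N)) => //.
  by lia.
apply: edge_condition_setC (complete_or_few_nonedges e_sym B cX cY deg_gt0 pkn rho) => //.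
  by rewrite -cW.
by rewrite p_lt_k ltnW.
Qed.
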